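(* Let $k\ge0$ be an integer and $a,b,c\in\mathbb{C}$ with $c\notin\{0,-1,-2,\dots\}$, $1+2c-b+k\notin\{0,-1,-2,\dots\}$, and $\mathrm{Re}(2c-a-2b+k)>0$. Then $${}_3F_2\!\left(\left.\begin{array}{c}a,\ b,\ c+1\\ 1+2c-b+k,\ c\end{array}\right|1\right)=\frac{\big[(a-2c)(b-c)+kc\big]\,\Gamma(2c-b+k+1)\,\Gamma(2c-a-2b+k)}{c\,\Gamma(2c-2b+k+1)\,\Gamma(2c-a-b+k+1)},$$ where $1/\Gamma$ is interpreted as the entire function.
   Context: ${}_3F_2(a_1,a_2,a_3;b_1,b_2;1)=\sum_{m\ge0}\frac{(a_1)_m(a_2)_m(a_3)_m}{m!\,(b_1)_m(b_2)_m}$ with $(\alpha)_m=\Gamma(\alpha+m)/\Gamma(\alpha)$, absolutely convergent when $\mathrm{Re}(b_1+b_2-a_1-a_2-a_3)>0$. *)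

From Stdlib Require Import Reals ClassicalEpsilon Factorial.
Open Scope R_scope.

Definition Cplx : Type := (R * R)%type.
Definition Re (z : Cplx) : R := fst z.
Definition Im (z : Cplx) : R := snd z.
Definition RtoC (x : R) : Cplx := (x, 0).
Definition Cadd (z w : Cplx) : Cplx := (fst z + fst w, snd z + snd w).
Definition Copp (z : Cplx) : Cplx := (- fst z, - snd z).
Definition Csub (z w : Cplx) : Cplx := Cadd z (Copp w).
Definition Cmul (z w : Cplx) : Cplx :=
  (fst z * fst w - snd z * snd w, fst z * snd w + snd z * fst w).
Definition Cinv (z : Cplx) : Cplx :=
  (fst z / (fst z ^ 2 + snd z ^ 2), - snd z / (fst z ^ 2 + snd z ^ 2)).
Definition Cdiv (z w : Cplx) : Cplx := Cmul z (Cinv w).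
Definition Cexp (z : Cplx) : Cplx := (exp (fst z) * cos (snd z), exp (fst z) * sin (snd z)).
Definition Rcpow (x : R) (z : Cplx) : Cplx := Cexp (Cmul z (RtoC (ln x))).

Definition Ccv (u : nat -> Cplx) (l : Cplx) : Prop :=
  Un_cv (fun n => fst (u n)) (fst l) /\ Un_cv (fun n => snd (u n)) (snd l).
Fixpoint Csum (f : nat -> Cplx) (N : nat) : Cplx :=
  match N with
  | O => f O
  | S n => Cadd (Csum f n) (f (S n))
  end.
Definition Cseries_cv (f : nat -> Cplx) (l : Cplx) : Prop := Ccv (Csum f) l.

(* limit of a complex sequence (arbitrary value if it diverges) *)
Definition Clim (u : nat -> Cplx) : Cplx :=
  epsilon (inhabits (0, 0)) (fun l => Ccv u l).

Fixpoint poch (a : Cplx) (m : nat) : Cplx :=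
  match m with
  | O => RtoC 1
  | S n => Cmul (poch a n) (Cadd a (RtoC (INR n)))
  end.

(* 1/Gamma, the entire function, via Gauss' limit formula:
   1/Gamma(z) = lim_n z(z+1)...(z+n) / (n! n^z). *)
Definition rGamma (z : Cplx) : Cplx :=
  Clim (fun n => Cdiv (poch z (S (S n)))
                      (Cmul (RtoC (INR (fact (S n)))) (Rcpow (INR (S n)) z))).
(* Gamma(z) := 1 / (1/Gamma(z)) (meaningful away from the poles) *)
Definition Gamma (z : Cplx) : Cplx := Cinv (rGamma z).

Definition F32_term (a1 a2 a3 b1 b2 : Cplx) (m : nat) : Cplx :=
  Cdiv (Cmul (Cmul (poch a1 m) (poch a2 m)) (poch a3 m))
       (Cmul (Cmul (RtoC (INR (fact m))) (poch b1 m)) (poch b2 m)).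

Definition not_nonpos_int (z : Cplx) : Prop := forall n : nat, z <> RtoC (- INR n).

(* Since (c + 1)_m / (c)_m = 1 + m / c, the 3F2 series splits, with d = 1 + 2c - b + k, as
   F(a, b; d) + a b / (c d) F(a + 1, b + 1; d + 1), and Gauss's summation theorem
   F(a, b; c) = Gamma(c) Gamma(c - a - b) / (Gamma(c - a) Gamma(c - b)) evaluates both
   terms; Gamma(z + 1) = z Gamma(z) then combines them into the closed form.
   Gauss's theorem is derived from the definition of 1/Gamma as the limit of Gauss's
   product, which converges because consecutive ratios are 1 + O(1/N^2): iterating the
   contiguous relation c (c - a - b) F(c) = (c - a) (c - b) F(c + 1) n times writes
   F(a, b; c) through the Gauss products at c, c - a - b, c - a, c - b and
   F(a, b; c + n), and the latter tends to 1. *)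

From Stdlib Require Import Reals Lra Lia ClassicalEpsilon Factorial.
From Coquelicot Require Import Coquelicot.
From Pilot Require Import Defs.
Open Scope R_scope.

(* The complex operations of [Defs] are definitionally Coquelicot's; rewriting
   them into the latter makes [ring], [field] and [Coquelicot.Complex] available. *)
Ltac to_C :=
  change Defs.Cdiv with Complex.Cdiv in *; change Defs.Cadd with Cplus in *;
  change Defs.Cmul with Cmult in *; change Defs.Csub with Cminus in *;
  change Defs.Cinv with Complex.Cinv in *; change Defs.Copp with Complex.Copp in *;
  change Defs.RtoC with Complex.RtoC in *; try change Cplx with C in *.

Lemma Ccv_intro (u : nat -> C) (l : C) :
  is_lim_seq (fun n => fst (u n)) (fst l) -> is_lim_seq (fun n => snd (u n)) (snd l) ->
  Ccv u l.
Proof. split; apply is_lim_seq_Reals; assumption. Qed.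

Lemma Ccv_fst u l : Ccv u l -> is_lim_seq (fun n => fst (u n)) (fst l).
Proof. intros [H _]; apply is_lim_seq_Reals; exact H. Qed.

Lemma Ccv_snd u l : Ccv u l -> is_lim_seq (fun n => snd (u n)) (snd l).
Proof. intros [_ H]; apply is_lim_seq_Reals; exact H. Qed.

Lemma Ccv_const (l : C) : Ccv (fun _ => l) l.
Proof. apply Ccv_intro; apply is_lim_seq_const. Qed.

Lemma Ccv_plus (u v : nat -> C) l1 l2 :
  Ccv u l1 -> Ccv v l2 -> Ccv (fun n => (u n + v n)%C) (l1 + l2)%C.
Proof.
  intros H1 H2; apply Ccv_intro; simpl;
    apply is_lim_seq_plus'; auto using Ccv_fst, Ccv_snd.
Qed.

Lemma Ccv_mult (u v : nat -> C) l1 l2 :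
  Ccv u l1 -> Ccv v l2 -> Ccv (fun n => (u n * v n)%C) (l1 * l2)%C.
Proof.
  intros H1 H2; apply Ccv_intro; simpl.
  - apply is_lim_seq_minus'; apply is_lim_seq_mult'; auto using Ccv_fst, Ccv_snd.
  - apply is_lim_seq_plus'; apply is_lim_seq_mult'; auto using Ccv_fst, Ccv_snd.
Qed.

Lemma Ccv_ext (u v : nat -> C) l : (forall n, u n = v n) -> Ccv u l -> Ccv v l.
Proof.
  intros E H; apply Ccv_intro.
  - apply (is_lim_seq_ext (fun n => fst (u n))); [intro n; rewrite E; reflexivity|].
    exact (Ccv_fst _ _ H).
  - apply (is_lim_seq_ext (fun n => snd (u n))); [intro n; rewrite E; reflexivity|].
    exact (Ccv_snd _ _ H).
Qed.

Lemma Ccv_incr_n (u : nat -> C) N l : Ccv u l <-> Ccv (fun n => u (n + N)%nat) l.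
Proof.
  split; intro H; apply Ccv_intro.
  - apply (is_lim_seq_incr_n (fun n => fst (u n))), Ccv_fst, H.
  - apply (is_lim_seq_incr_n (fun n => snd (u n))), Ccv_snd, H.
  - apply (is_lim_seq_incr_n (fun n => fst (u n)) N), (Ccv_fst _ _ H).
  - apply (is_lim_seq_incr_n (fun n => snd (u n)) N), (Ccv_snd _ _ H).
Qed.

Lemma Ccv_incr_1 (u : nat -> C) l : Ccv u l <-> Ccv (fun n => u (S n)) l.
Proof.
  rewrite (Ccv_incr_n u 1).
  split; apply Ccv_ext; intro n; rewrite Nat.add_1_r; reflexivity.
Qed.

Lemma Ccv_unique u l1 l2 : Ccv u l1 -> Ccv u l2 -> l1 = l2.
Proof.
  intros H1 H2.
  assert (Hfst := is_lim_seq_unique _ _ (Ccv_fst _ _ H1)).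
  rewrite (is_lim_seq_unique _ _ (Ccv_fst _ _ H2)) in Hfst.
  assert (Hsnd := is_lim_seq_unique _ _ (Ccv_snd _ _ H1)).
  rewrite (is_lim_seq_unique _ _ (Ccv_snd _ _ H2)) in Hsnd.
  injection Hfst; injection Hsnd; intros.
  apply injective_projections; congruence.
Qed.

Lemma Clim_eq u l : Ccv u l -> Clim u = l.
Proof.
  intro H. apply (Ccv_unique u); [|exact H].
  unfold Clim; apply epsilon_spec. exists l; exact H.
Qed.

Lemma Ccv_RtoC (u : nat -> R) (l : R) :
  is_lim_seq u l -> Ccv (fun n => (u n : C)) (l : C).
Proof. intro H. apply Ccv_intro; simpl; [exact H|apply is_lim_seq_const]. Qed.

Lemma RtoC_neq_0 x : x <> 0 -> (x : C) <> 0.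
Proof. intros H E; injection E; tauto. Qed.

Lemma Cinv_neq_0 (x : C) : x <> 0 -> (/ x)%C <> 0.
Proof.
  intros H E. assert (Y := Cinv_l x H). rewrite E, Cmult_0_l in Y.
  injection Y; lra.
Qed.

Lemma Rabs_fst_le_Cmod (x : C) : Rabs (fst x) <= Cmod x.
Proof. generalize (Rmax_Cmod x) (Rmax_l (Rabs (fst x)) (Rabs (snd x))); lra. Qed.

Lemma Rabs_snd_le_Cmod (x : C) : Rabs (snd x) <= Cmod x.
Proof. generalize (Rmax_Cmod x) (Rmax_r (Rabs (fst x)) (Rabs (snd x))); lra. Qed.

Lemma Cmod_le_Rabs_fst_snd (x : C) : Cmod x <= Rabs (fst x) + Rabs (snd x).
Proof.
  unfold Cmod. rewrite <- (sqrt_Rsqr (Rabs (fst x) + Rabs (snd x)))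
    by (generalize (Rabs_pos (fst x)) (Rabs_pos (snd x)); lra).
  apply sqrt_le_1_alt. unfold Rsqr.
  rewrite <- (pow2_abs (fst x)), <- (pow2_abs (snd x)).
  generalize (Rabs_pos (fst x)) (Rabs_pos (snd x)); nra.
Qed.

Lemma Cmod_triangle_rev (x y : C) : Rabs (Cmod x - Cmod y) <= Cmod (x - y).
Proof.
  assert (A : Cmod x <= Cmod (x - y) + Cmod y).
  { replace x with ((x - y) + y)%C at 1 by ring. apply Cmod_triangle. }
  assert (B : Cmod y <= Cmod (x - y) + Cmod x).
  { replace y with (- (x - y) + x)%C at 1 by ring.
    rewrite <- (Cmod_opp (x - y)). apply Cmod_triangle. }
  apply Rabs_le; lra.
Qed.

Lemma is_lim_seq_of_abs_le (x e : nat -> R) l :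
  (forall n, Rabs (x n - l) <= e n) -> is_lim_seq e 0 -> is_lim_seq x l.
Proof.
  intros H He.
  assert (D : is_lim_seq (fun n => x n - l) 0).
  { apply (proj2 (is_lim_seq_abs_0 _)), (is_lim_seq_le_le (fun _ => 0) _ e);
      [|apply is_lim_seq_const|exact He].
    intro n; split; [apply Rabs_pos|apply H]. }
  apply (is_lim_seq_ext (fun n => (x n - l) + l)); [intro; ring|].
  replace (Finite l) with (Rbar_plus 0 l) by (simpl; f_equal; ring).
  apply is_lim_seq_plus'; [exact D|apply is_lim_seq_const].
Qed.

Lemma Ccv_of_Cmod_le (u : nat -> C) l e :
  (forall n, Cmod (u n - l) <= e n) -> is_lim_seq e 0 -> Ccv u l.
Proof.
  intros H He. apply Ccv_intro; apply (is_lim_seq_of_abs_le _ e); auto; intro n;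
    eapply Rle_trans; [|apply (H n)|..|apply (H n)].
  - apply (Rabs_fst_le_Cmod (u n - l)).
  - apply (Rabs_snd_le_Cmod (u n - l)).
Qed.

Lemma Ccv_Cmod u l : Ccv u l -> is_lim_seq (fun n => Cmod (u n)) (Cmod l).
Proof.
  intro H.
  apply (is_lim_seq_of_abs_le _ (fun n => Rabs (fst (u n) - fst l) + Rabs (snd (u n) - snd l))).
  - intro n. eapply Rle_trans; [apply Cmod_triangle_rev|].
    apply (Cmod_le_Rabs_fst_snd (u n - l)).
  - replace 0 with (0 + 0) by ring.
    apply is_lim_seq_plus'; apply (proj1 (is_lim_seq_abs_0 _)).
    + replace 0 with (fst l - fst l) by ring.
      apply is_lim_seq_minus'; [apply (Ccv_fst _ _ H)|apply is_lim_seq_const].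
    + replace 0 with (snd l - snd l) by ring.
      apply is_lim_seq_minus'; [apply (Ccv_snd _ _ H)|apply is_lim_seq_const].
Qed.

Lemma Cmod_lim_ge u l m N :
  Ccv u l -> (forall n, (N <= n)%nat -> m <= Cmod (u n)) -> m <= Cmod l.
Proof.
  intros H Hm. apply Ccv_Cmod, (is_lim_seq_incr_n _ N) in H.
  change (Rbar_le m (Cmod l)).
  apply (is_lim_seq_le (fun _ => m) (fun n => Cmod (u (n + N)%nat)));
    [intro n; apply Hm; lia|apply is_lim_seq_const|exact H].
Qed.

Lemma Csum_fst f N : fst (Csum f N) = sum_n (fun k => fst (f k)) N.
Proof. induction N; simpl; [rewrite sum_O|rewrite sum_Sn, IHN]; reflexivity. Qed.

Lemma Csum_snd f N : snd (Csum f N) = sum_n (fun k => snd (f k)) N.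
Proof. induction N; simpl; [rewrite sum_O|rewrite sum_Sn, IHN]; reflexivity. Qed.

Lemma Cmod_Csum_le f N : Cmod (Csum f N) <= sum_n (fun n => Cmod (f n)) N.
Proof.
  induction N; simpl.
  - rewrite sum_O; lra.
  - rewrite sum_Sn. eapply Rle_trans; [apply (Cmod_triangle (Csum f N) (f (S N)))|].
    change plus with Rplus; simpl; lra.
Qed.

Lemma Csum_ext f g N : (forall n, f n = g n) -> Csum f N = Csum g N.
Proof. intro H; induction N; simpl; rewrite ?IHN, ?H; reflexivity. Qed.

Lemma Csum_plus f g N : Csum (fun n => f n + g n)%C N = (Csum f N + Csum g N)%C.
Proof.
  induction N; simpl; [reflexivity|]. rewrite IHN.
  change ((Csum f N + Csum g N) + (f (S N) + g (S N)) =
          (Csum f N + f (S N)) + (Csum g N + g (S N)))%C; ring.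
Qed.

Lemma Csum_scal (c : C) f N : Csum (fun n => c * f n)%C N = (c * Csum f N)%C.
Proof.
  induction N; simpl; [reflexivity|]. rewrite IHN.
  change (c * Csum f N + c * f (S N) = c * (Csum f N + f (S N)))%C; ring.
Qed.

Lemma Csum_S f N : Csum f (S N) = (f 0%nat + Csum (fun n => f (S n)) N)%C.
Proof.
  induction N; [reflexivity|]. change (Csum f (S (S N))) with (Csum f (S N) + f (S (S N)))%C.
  rewrite IHN. change ((f 0%nat + Csum (fun n => f (S n)) N) + f (S (S N)) =
    f 0%nat + (Csum (fun n => f (S n)) N + f (S (S N))))%C; ring.
Qed.

Lemma Cseries_ext f g l : (forall n, f n = g n) -> Cseries_cv f l -> Cseries_cv g l.
Proof. intros E H. apply (Ccv_ext (Csum f)); [intro; apply Csum_ext, E|exact H]. Qed.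

Lemma Cseries_plus f g l1 l2 : Cseries_cv f l1 -> Cseries_cv g l2 ->
  Cseries_cv (fun n => f n + g n)%C (l1 + l2)%C.
Proof.
  intros H1 H2. apply (Ccv_ext (fun N => Csum f N + Csum g N)%C);
    [intro; symmetry; apply Csum_plus|apply Ccv_plus; assumption].
Qed.

Lemma Cseries_scal c f l : Cseries_cv f l -> Cseries_cv (fun n => c * f n)%C (c * l)%C.
Proof.
  intro H. apply (Ccv_ext (fun N => c * Csum f N)%C);
    [intro; symmetry; apply Csum_scal|apply Ccv_mult; auto using Ccv_const].
Qed.

Lemma Cseries_incr_1 f l :
  Cseries_cv (fun n => f (S n)) l -> Cseries_cv f (f 0%nat + l)%C.
Proof.
  intro H. apply Ccv_incr_1.
  apply (Ccv_ext (fun N => f 0%nat + Csum (fun n => f (S n)) N)%C);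
    [intro; symmetry; apply Csum_S|apply Ccv_plus; auto using Ccv_const].
Qed.

Lemma Cseries_of_ex_series_Cmod (f : nat -> C) :
  ex_series (fun n => Cmod (f n)) ->
  Cseries_cv f (Series (fun n => fst (f n)), Series (fun n => snd (f n))).
Proof.
  intro H.
  assert (E : forall g : C -> R, (forall x, Rabs (g x) <= Cmod x) ->
            is_lim_seq (sum_n (fun n => g (f n))) (Series (fun n => g (f n)))).
  { intros g Hg. apply Series_correct, ex_series_Rabs.
    apply (@ex_series_le R_AbsRing R_CompleteNormedModule _ (fun n => Cmod (f n))); [|exact H].
    intro n; rewrite Rabs_Rabsolu; apply Hg. }
  apply Ccv_intro; simpl.
  - eapply is_lim_seq_ext; [intro n; symmetry; apply Csum_fst|].
    apply E, Rabs_fst_le_Cmod.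
  - eapply is_lim_seq_ext; [intro n; symmetry; apply Csum_snd|].
    apply E, Rabs_snd_le_Cmod.
Qed.

Lemma Cseries_ex (f : nat -> C) :
  ex_series (fun n => Cmod (f n)) -> exists l, Cseries_cv f l.
Proof. intro H; eexists; apply Cseries_of_ex_series_Cmod, H. Qed.

Lemma Cmod_Cseries_le (f : nat -> C) l (g : nat -> R) :
  Cseries_cv f l -> (forall n, Cmod (f n) <= g n) -> ex_series g -> Cmod l <= Series g.
Proof.
  intros H Hg E. apply Series_correct in E.
  change (Rbar_le (Cmod l) (Series g)).
  apply (is_lim_seq_le (fun N => Cmod (Csum f N)) (sum_n g)); [|apply Ccv_Cmod, H|exact E].
  intro N. eapply Rle_trans; [apply Cmod_Csum_le|]. apply sum_n_m_le, Hg.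
Qed.

Lemma Ccv_of_ex_series_diff (u : nat -> C) :
  ex_series (fun n => Cmod (u (S n) - u n)) -> exists l, Ccv u l.
Proof.
  intro H. destruct (Cseries_ex _ H) as [l Hl]. exists (u 0%nat + l)%C.
  apply Ccv_incr_1, (Ccv_ext (fun n => u 0%nat + Csum (fun n => u (S n) - u n) n)%C).
  - intro n; induction n.
    + change (u 0%nat + (u 1%nat - u 0%nat) = u 1%nat)%C; ring.
    + change (u 0%nat + (Csum (fun n => u (S n) - u n) n + (u (S (S n)) - u (S n))) =
              u (S (S n)))%C.
      rewrite <- IHn; ring.
  - apply Ccv_plus; [apply Ccv_const|exact Hl].
Qed.

Lemma INR_pos n : (1 <= n)%nat -> 0 < INR n.
Proof. intro; apply lt_0_INR; lia. Qed.

Lemma exp_le a b : a <= b -> exp a <= exp b.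
Proof. intros [H|H]; [left; apply exp_increasing, H|rewrite H; lra]. Qed.

Lemma ln_le_sub_1 y : 0 < y -> ln y <= y - 1.
Proof.
  intro Hy. rewrite <- (ln_exp (y - 1)). apply ln_le; [exact Hy|].
  generalize (exp_ineq1_le (y - 1)); lra.
Qed.

Lemma ln_ge_1_sub_inv y : 0 < y -> 1 - / y <= ln y.
Proof.
  intro Hy. generalize (ln_le_sub_1 (/ y) (Rinv_0_lt_compat y Hy)).
  rewrite ln_Rinv by exact Hy. lra.
Qed.

Lemma ln_div_S_bounds n : 1 <= n -> - / n <= ln (n / (n + 1)) <= - / (n + 1).
Proof.
  intro Hn. assert (P : 0 < n / (n + 1)) by (apply Rdiv_lt_0_compat; lra).
  generalize (ln_ge_1_sub_inv _ P) (ln_le_sub_1 _ P).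
  replace (1 - / (n / (n + 1))) with (- / n) by (field; lra).
  replace (n / (n + 1) - 1) with (- / (n + 1)) by (field; lra).
  lra.
Qed.

Lemma ex_series_Rabs_le (a b : nat -> R) :
  (forall n, Rabs (a n) <= b n) -> ex_series b -> ex_series a.
Proof. intros H E. apply (@ex_series_le R_AbsRing R_CompleteNormedModule a b H E). Qed.

Lemma ex_series_Rscal (c : R) (a : nat -> R) : ex_series a -> ex_series (fun n => c * a n).
Proof. exact (@ex_series_scal_l R_AbsRing R_NormedModule c a). Qed.

Lemma ex_series_telescope (f : nat -> R) (L : R) :
  is_lim_seq f L -> ex_series (fun n => f n - f (S n)).
Proof.
  intro H. exists (f 0%nat - L).
  assert (E : forall n, sum_n (fun n => f n - f (S n)) n = f 0%nat - f (S n)).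
  { induction n; [rewrite sum_O; reflexivity|].
    rewrite sum_Sn, IHn. change plus with Rplus. simpl. ring. }
  assert (K : is_lim_seq (fun n => f 0%nat - f (S n)) (f 0%nat - L)).
  { apply is_lim_seq_minus'; [apply is_lim_seq_const|apply (is_lim_seq_incr_1 f), H]. }
  apply (is_lim_seq_ext _ _ _ (fun n => eq_sym (E n))) in K. exact K.
Qed.

Lemma is_lim_seq_inv_INR a : is_lim_seq (fun n => / INR (n + a)) 0.
Proof.
  replace (Finite 0) with (Rbar_inv p_infty) by reflexivity.
  apply is_lim_seq_inv; [|discriminate].
  apply (is_lim_seq_incr_n INR a), is_lim_seq_INR.
Qed.

Lemma ex_series_inv_INR_mul_S a :
  (1 <= a)%nat -> ex_series (fun n => / (INR (n + a) * INR (S (n + a)))).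
Proof.
  intro Ha.
  apply (@ex_series_ext R_AbsRing R_NormedModule (fun n => / INR (n + a) - / INR (S n + a))).
  - intro n. simpl (S n + a)%nat. rewrite S_INR.
    assert (0 < INR (n + a)) by (apply INR_pos; lia).
    change (/ INR (n + a) - / (INR (n + a) + 1) = / (INR (n + a) * (INR (n + a) + 1))).
    field; lra.
  - apply (ex_series_telescope (fun n => / INR (n + a)) 0), is_lim_seq_inv_INR.
Qed.

Lemma is_lim_seq_exp_neg_ln (d : R) : 0 < d -> is_lim_seq (fun n => exp (- d * ln (INR n))) 0.
Proof.
  intro Hd.
  apply (is_lim_comp_seq exp _ m_infty 0); [apply is_lim_exp_m|exists 0%nat; discriminate|].
  apply (is_lim_seq_ext (fun n => ln (INR n) * (- d))); [intro; ring|].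
  apply (is_lim_seq_mult _ _ p_infty (- d)).
  - apply (is_lim_comp_seq ln _ p_infty p_infty);
      [apply is_lim_ln_p|exists 0%nat; discriminate|apply is_lim_seq_INR].
  - apply is_lim_seq_const.
  - apply is_Rbar_mult_p_infty_neg. simpl; lra.
Qed.

(* Comparison with the telescoping series [(N ^ (- d) - (N + 1) ^ (- d)) / d]. *)
Lemma ex_series_exp_neg_ln_div (d : R) (b : nat) : 0 < d -> (1 <= b)%nat ->
  ex_series (fun n => exp (- d * ln (INR (S (n + b)))) / INR (S (n + b))).
Proof.
  intros Hd Hb.
  set (f := fun n => exp (- d * ln (INR (n + b)))).
  apply (ex_series_Rabs_le _ (fun n => / d * (f n - f (S n)))).
  - intro n. unfold f. set (N := INR (n + b)).
    assert (HN : 1 <= N) by (apply (le_INR 1); lia).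
    replace (INR (S n + b)) with (N + 1) by (unfold N; rewrite <- S_INR; reflexivity).
    replace (INR (S (n + b))) with (N + 1) by (unfold N; rewrite <- S_INR; reflexivity).
    rewrite Rabs_right by (apply Rle_ge, Rmult_le_pos;
      [left; apply exp_pos|left; apply Rinv_0_lt_compat; lra]).
    set (A := - d * ln N). set (B := - d * ln (N + 1)).
    assert (LN : / (N + 1) <= ln (N + 1) - ln N).
    { rewrite <- ln_div by lra.
      generalize (ln_ge_1_sub_inv ((N + 1) / N) ltac:(apply Rdiv_lt_0_compat; lra)).
      replace (1 - / ((N + 1) / N)) with (/ (N + 1)) by (field; lra). lra. }
    assert (EX : exp B * (A - B) <= exp A - exp B).
    { replace (exp A) with (exp B * exp (A - B)) by (rewrite <- exp_plus; f_equal; ring).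
      generalize (exp_ineq1_le (A - B)) (exp_pos B); nra. }
    assert (AB : d / (N + 1) <= A - B) by (unfold A, B, Rdiv; nra).
    assert (exp B * (d / (N + 1)) <= exp A - exp B) by (generalize (exp_pos B); nra).
    apply (Rmult_le_reg_l d); [exact Hd|].
    rewrite <- Rmult_assoc, Rinv_r, Rmult_1_l by lra.
    unfold Rdiv in *. lra.
  - apply ex_series_Rscal, (ex_series_telescope f 0).
    apply (is_lim_seq_incr_n (fun n => exp (- d * ln (INR n))) b), is_lim_seq_exp_neg_ln, Hd.
Qed.

Lemma sin_near_0_pos v : 0 <= v <= 1 -> v - v ^ 3 / 6 <= sin v <= v.
Proof.
  intro H. destruct (pre_sin_bound v 0 ltac:(lra) ltac:(lra)) as [A _].
  unfold sin_approx, sin_term in A; simpl in A. split; [lra|].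
  destruct (Req_dec v 0) as [->|Hv]; [rewrite sin_0; lra|]. left; apply sin_lt_x; lra.
Qed.

Lemma sin_near_0 v : Rabs v <= 1 -> Rabs (sin v - v) <= v ^ 2 /\ Rabs (sin v) <= Rabs v.
Proof.
  intro H. destruct (Rle_dec 0 v) as [Hp|Hn].
  - rewrite Rabs_right in H by lra. destruct (sin_near_0_pos v ltac:(lra)).
    rewrite (Rabs_right v) by lra. split; apply Rabs_le; nra.
  - rewrite Rabs_left in H by lra. destruct (sin_near_0_pos (- v) ltac:(lra)) as [A B].
    rewrite sin_neg in A, B. rewrite (Rabs_left v) by lra. split; apply Rabs_le; nra.
Qed.

Lemma cos_near_0 v : Rabs v <= 1 -> Rabs (cos v - 1) <= v ^ 2 / 2.
Proof.
  intro H. apply Rabs_le_between in H.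
  destruct (pre_cos_bound v 0 ltac:(lra) ltac:(lra)) as [A _].
  unfold cos_approx, cos_term in A; simpl in A.
  generalize (COS_bound v); intro; apply Rabs_le; nra.
Qed.

Lemma exp_near_0 u : Rabs u <= / 2 -> Rabs (exp u - 1 - u) <= 2 * u ^ 2.
Proof.
  intro H. apply Rabs_le_between in H.
  generalize (exp_ineq1_le u) (exp_ineq1_le (- u)); intros A B.
  assert (P : exp u * exp (- u) = 1)
    by (rewrite <- exp_plus, Rplus_opp_r; apply exp_0).
  assert (Q : exp u * (1 - u) <= 1)
    by (rewrite <- P; apply Rmult_le_compat_l; [left; apply exp_pos|lra]).
  apply Rabs_le; split; [nra|].
  destruct (Rle_dec (exp u - 1 - u) 0); [nra|].
  assert ((exp u - 1 - u) * (1 - u) <= u ^ 2) by nra. nra.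
Qed.

Lemma exp_sub_1_near_0 u : Rabs u <= / 2 -> Rabs (exp u - 1) <= 2 * Rabs u.
Proof.
  intro H. generalize (exp_near_0 u H); intro A.
  replace (exp u - 1) with ((exp u - 1 - u) + u) by ring.
  eapply Rle_trans; [apply Rabs_triang|].
  rewrite <- (pow2_abs u) in A. generalize (Rabs_pos u); nra.
Qed.

Lemma Cexp_add (p q : C) : Cexp (p + q)%C = (Cexp p * Cexp q)%C.
Proof.
  destruct p as [p1 p2], q as [q1 q2]; unfold Cexp, Cplus, Cmult; simpl.
  rewrite exp_plus, cos_plus, sin_plus. f_equal; ring.
Qed.

Lemma Cmod_Cexp (w : C) : Cmod (Cexp w) = exp (fst w).
Proof.
  destruct w as [u v]; unfold Cmod, Cexp; simpl.
  replace (exp u * cos v * (exp u * cos v * 1) + exp u * sin v * (exp u * sin v * 1))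
    with (exp u * exp u * (sin v * sin v + cos v * cos v)) by ring.
  generalize (sin2_cos2 v); unfold Rsqr; intro E; rewrite E, Rmult_1_r.
  apply sqrt_square. left; apply exp_pos.
Qed.

Lemma Cexp_sub_1_sub_le (w : C) : Cmod w <= / 2 -> Cmod (Cexp w - 1 - w) <= 4 * Cmod w ^ 2.
Proof.
  intro Hw. rewrite Cmod2_alt. assert (Hu := Rabs_fst_le_Cmod w). assert (Hv := Rabs_snd_le_Cmod w).
  destruct w as [u v]; simpl in *; unfold Complex.Re, Complex.Im; simpl.
  eapply Rle_trans; [apply Cmod_le_Rabs_fst_snd|]. simpl.
  replace (exp u * cos v + - (1) + - u)
    with ((exp u - 1 - u) * cos v + (1 + u) * (cos v - 1)) by ring.
  replace (exp u * sin v + - 0 + - v) with ((exp u - 1) * sin v + (sin v - v)) by ring.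
  destruct (sin_near_0 v ltac:(lra)) as [S1 S2].
  assert (C1 := cos_near_0 v ltac:(lra)).
  assert (E1 := exp_near_0 u ltac:(lra)). assert (E2 := exp_sub_1_near_0 u ltac:(lra)).
  assert (CB : Rabs (cos v) <= 1) by (apply Rabs_le, COS_bound).
  assert (U1 : Rabs (1 + u) <= 3 / 2) by (apply Rabs_le; apply Rabs_le_between in Hu; lra).
  assert (A1 : Rabs ((exp u - 1 - u) * cos v) <= 2 * u ^ 2).
  { rewrite Rabs_mult. generalize (Rabs_pos (exp u - 1 - u)) (Rabs_pos (cos v)); nra. }
  assert (A2 : Rabs ((1 + u) * (cos v - 1)) <= 3 / 2 * (v ^ 2 / 2)).
  { rewrite Rabs_mult. generalize (Rabs_pos (1 + u)) (Rabs_pos (cos v - 1)); nra. }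
  assert (A3 : Rabs ((exp u - 1) * sin v) <= 2 * Rabs u * Rabs v).
  { rewrite Rabs_mult. generalize (Rabs_pos (exp u - 1)) (Rabs_pos (sin v)) (Rabs_pos u); nra. }
  rewrite <- (pow2_abs u), <- (pow2_abs v) in *.
  generalize (Rabs_triang ((exp u - 1 - u) * cos v) ((1 + u) * (cos v - 1)))
             (Rabs_triang ((exp u - 1) * sin v) (sin v - v))
             (pow2_ge_0 (Rabs u - Rabs v)).
  replace (u * (u * 1) + v * (v * 1)) with (Rabs u ^ 2 + Rabs v ^ 2)
    by (rewrite !pow2_abs; ring).
  nra.
Qed.

Lemma Cexp_neq_0 (w : C) : (Cexp w : C) <> 0.
Proof.
  intro E. assert (H := Cmod_Cexp w). rewrite E, Cmod_0 in H.
  generalize (exp_pos (fst w)); lra.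
Qed.

Lemma Rcpow_mult x y z : 0 < x -> 0 < y -> Rcpow (x * y) z = (Rcpow x z * Rcpow y z)%C.
Proof.
  intros Hx Hy. unfold Rcpow. rewrite ln_mult, <- Cexp_add by assumption. f_equal.
  destruct z; unfold Cmul, Cplus, RtoC; simpl; f_equal; ring.
Qed.

Lemma Rcpow_plus x z w : Rcpow x (z + w)%C = (Rcpow x z * Rcpow x w)%C.
Proof.
  unfold Rcpow. rewrite <- Cexp_add. f_equal.
  destruct z, w; unfold Cmul, Cplus, RtoC; simpl; f_equal; ring.
Qed.

Lemma Cmod_Rcpow x z : Cmod (Rcpow x z) = exp (fst z * ln x).
Proof. unfold Rcpow. rewrite Cmod_Cexp. simpl. f_equal; ring. Qed.

Lemma Rcpow_neq_0 x z : (Rcpow x z : C) <> 0.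
Proof. apply Cexp_neq_0. Qed.

Lemma Rcpow_1 x : 0 < x -> Rcpow x (1 : C) = (x : C).
Proof.
  intro H. unfold Rcpow, Cexp, Cmul, Defs.RtoC, Complex.RtoC; simpl.
  replace (1 * ln x - 0 * 0) with (ln x) by ring. replace (1 * 0 + 0 * ln x) with 0 by ring.
  rewrite cos_0, sin_0, exp_ln by exact H. f_equal; ring.
Qed.

(** * Sequences with ratios [1 + O (1 / N ^ 2)] *)

Lemma inv_INR_le M N : (1 <= M)%nat -> (M <= N)%nat -> / INR N <= / INR M.
Proof. intros. apply Rinv_le_contravar; [apply INR_pos; lia|apply le_INR; lia]. Qed.

Lemma div_INR_mul_S K M :
  (1 <= M)%nat -> K / (INR M * INR (S M)) = K * (/ INR M - / INR (S M)).
Proof. intro. rewrite S_INR. assert (0 < INR M) by (apply INR_pos; lia). field; lra. Qed.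

Section RatioNearOne.

Variables (x : nat -> C) (K : R) (N0 : nat).
Hypotheses (HN0 : (1 <= N0)%nat) (HK : 0 <= K).
Hypothesis Hstep : forall N, (N0 <= N)%nat ->
  Cmod (x (S N) - x N) <= Cmod (x N) * (K / (INR N * INR (S N))).

Lemma Cmod_succ_between N : (N0 <= N)%nat ->
  Cmod (x N) * (1 - K * (/ INR N - / INR (S N))) <= Cmod (x (S N)) <=
  Cmod (x N) * (1 + K * (/ INR N - / INR (S N))).
Proof.
  intro HN. generalize (Hstep N HN) (Cmod_triangle_rev (x (S N)) (x N)).
  rewrite div_INR_mul_S by lia. intros A B. apply Rabs_le_between in B. lra.
Qed.

Lemma K_mul_inv_INR_sub_ge0 M N :
  (N0 <= M)%nat -> (M <= N)%nat -> 0 <= K * (/ INR M - / INR N).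
Proof.
  intros HM HMN. apply Rmult_le_pos; [exact HK|].
  generalize (inv_INR_le M N ltac:(lia) HMN); lra.
Qed.

Lemma Cmod_le_exp N : (N0 <= N)%nat ->
  Cmod (x N) <= Cmod (x N0) * exp (K * (/ INR N0 - / INR N)).
Proof.
  intro HN; induction HN as [|M HM IH].
  - rewrite Rminus_diag, Rmult_0_r, exp_0. lra.
  - set (e := K * (/ INR M - / INR (S M))).
    assert (He : 0 <= e) by (apply K_mul_inv_INR_sub_ge0; lia).
    replace (K * (/ INR N0 - / INR (S M))) with (K * (/ INR N0 - / INR M) + e)
      by (unfold e; ring).
    rewrite exp_plus, <- Rmult_assoc.
    destruct (Cmod_succ_between M HM) as [_ Up].
    eapply Rle_trans; [exact Up|]. fold e.
    apply Rmult_le_compat; [apply Cmod_ge_0|lra|exact IH|].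
    generalize (exp_ineq1_le e); lra.
Qed.

Lemma Cmod_ge_linear N : (N0 <= N)%nat ->
  Cmod (x N0) * (1 - K * (/ INR N0 - / INR N)) <= Cmod (x N).
Proof.
  intro HN; induction HN as [|M HM IH].
  - rewrite Rminus_diag, Rmult_0_r, Rminus_0_r. lra.
  - set (e := K * (/ INR M - / INR (S M))). set (s := K * (/ INR N0 - / INR M)) in IH.
    assert (He : 0 <= e) by (apply K_mul_inv_INR_sub_ge0; lia).
    assert (Hs : 0 <= s) by (apply K_mul_inv_INR_sub_ge0; lia).
    replace (K * (/ INR N0 - / INR (S M))) with (s + e) by (unfold s, e; ring).
    destruct (Cmod_succ_between M HM) as [Low _]. fold e in Low.
    generalize (Cmod_ge_0 (x M)) (Cmod_ge_0 (x N0)) (Cmod_ge_0 (x (S M))); intros.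
    destruct (Rle_dec 0 (1 - s - e)); [|nra].
    assert (0 <= Cmod (x N0) * (s * e)) by (apply Rmult_le_pos; [|apply Rmult_le_pos]; lra).
    nra.
Qed.

Lemma ratio_near_one_le N : (N0 <= N)%nat -> Cmod (x N) <= Cmod (x N0) * exp (K / INR N0).
Proof.
  intro HN. eapply Rle_trans; [apply Cmod_le_exp, HN|].
  apply Rmult_le_compat_l; [apply Cmod_ge_0|]. apply exp_le.
  assert (0 < / INR N) by (apply Rinv_0_lt_compat, INR_pos; lia).
  unfold Rdiv; nra.
Qed.

Lemma ratio_near_one_ge N : (N0 <= N)%nat -> Cmod (x N0) * (1 - K / INR N0) <= Cmod (x N).
Proof.
  intro HN. eapply Rle_trans; [|apply Cmod_ge_linear, HN].
  apply Rmult_le_compat_l; [apply Cmod_ge_0|].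
  assert (0 < / INR N) by (apply Rinv_0_lt_compat, INR_pos; lia).
  unfold Rdiv; nra.
Qed.

Lemma ratio_near_one_cv : exists l, Ccv x l.
Proof.
  set (M0 := Cmod (x N0) * exp (K / INR N0)).
  destruct (Ccv_of_ex_series_diff (fun n => x (n + N0)%nat)) as [l Hl].
  - apply (ex_series_Rabs_le _ (fun n => M0 * K * / (INR (n + N0) * INR (S (n + N0))))).
    + intro n. rewrite Rabs_right by (apply Rle_ge, Cmod_ge_0).
      eapply Rle_trans; [apply (Hstep (n + N0)); lia|].
      assert (0 < INR (n + N0) * INR (S (n + N0)))
        by (apply Rmult_lt_0_compat; apply INR_pos; lia).
      unfold Rdiv. rewrite <- Rmult_assoc.
      apply Rmult_le_compat_r; [left; apply Rinv_0_lt_compat; lra|].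
      apply Rmult_le_compat_r; [exact HK|]. apply ratio_near_one_le; lia.
    + apply ex_series_Rscal, ex_series_inv_INR_mul_S, HN0.
  - exists l. apply (Ccv_incr_n _ N0), Hl.
Qed.

End RatioNearOne.

Lemma poch_S a n : poch a (S n) = (poch a n * (a + INR n))%C.
Proof. reflexivity. Qed.

Lemma INR_fact_neq_0 N : INR (fact N) <> 0.
Proof. apply not_0_INR, fact_neq_0. Qed.

Lemma not_nonpos_int_add_INR_neq_0 (a : C) n : not_nonpos_int a -> (a + INR n)%C <> 0.
Proof.
  intros H E; apply (H n).
  apply (f_equal (fun z => (z - INR n)%C)) in E.
  replace (a + INR n - INR n)%C with a in E by ring. rewrite E.
  apply injective_projections; simpl; ring.
Qed.

Lemma not_nonpos_int_neq_0 (c : C) : not_nonpos_int c -> c <> 0.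
Proof.
  intros H E. apply (not_nonpos_int_add_INR_neq_0 c 0 H).
  rewrite E. apply injective_projections; simpl; ring.
Qed.

Lemma not_nonpos_int_add_1 (c : C) : not_nonpos_int c -> not_nonpos_int (c + 1)%C.
Proof.
  intros H n E. apply (H (S n)). rewrite S_INR.
  apply (f_equal (fun z => (z - 1)%C)) in E.
  replace (c + 1 - 1)%C with c in E by ring. rewrite E.
  apply injective_projections; simpl; ring.
Qed.

Lemma not_nonpos_int_add_INR (c : C) n : not_nonpos_int c -> not_nonpos_int (c + INR n)%C.
Proof.
  intro H; induction n.
  - replace (c + INR 0)%C with c by (simpl; ring). exact H.
  - replace (c + INR (S n))%C with (c + INR n + 1)%C by (rewrite S_INR, RtoC_plus; ring).
    apply not_nonpos_int_add_1, IHn.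
Qed.

Lemma not_nonpos_int_of_Re_pos (w : C) : 0 < fst w -> not_nonpos_int w.
Proof. intros H n E. rewrite E in H. simpl in H. generalize (pos_INR n). lra. Qed.

Lemma poch_neq_0 (a : C) n : not_nonpos_int a -> (poch a n : C) <> 0.
Proof.
  intro H; induction n; simpl.
  - apply RtoC_neq_0, R1_neq_R0.
  - apply Cmult_neq_0; [exact IHn|exact (not_nonpos_int_add_INR_neq_0 a n H)].
Qed.

Lemma poch_add_1 (c : C) m : (c * poch (c + 1) m = poch c m * (c + INR m))%C.
Proof.
  induction m.
  - simpl. to_C. ring.
  - rewrite !poch_S, S_INR, RtoC_plus.
    transitivity (c * poch (c + 1) m * (c + 1 + INR m))%C; [ring|].
    rewrite IHm. ring.
Qed.

Lemma poch_S_l (a : C) m : poch a (S m) = (a * poch (a + 1) m)%C.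
Proof. rewrite poch_add_1. reflexivity. Qed.

(** * Gauss's product for [1 / Gamma] *)

Definition gauss_prod (N : nat) (z : C) : C :=
  (poch z (S N) / (INR (fact N) * Rcpow (INR N) z))%C.

Definition gauss_ratio (N : nat) (z : C) : C :=
  ((1 + z * (/ INR (S N))%R) * Rcpow (INR N / INR (S N)) z)%C.

Definition gauss_ratio_K (z : C) : R := Cmod z + Cmod z ^ 2 + 8 * (1 + Cmod z) * Cmod z ^ 2.

Lemma rGamma_gauss_prod z : rGamma z = Clim (fun n => gauss_prod (S n) z).
Proof. reflexivity. Qed.

Lemma gauss_prod_neq_0 N z : not_nonpos_int z -> gauss_prod N z <> 0.
Proof.
  intro H. apply Cmult_neq_0; [apply poch_neq_0, H|].
  apply Cinv_neq_0, Cmult_neq_0; [apply RtoC_neq_0, INR_fact_neq_0|apply Rcpow_neq_0].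
Qed.

Lemma poch_gauss_prod N z :
  (poch z (S N) : C) = (gauss_prod N z * (INR (fact N) * Rcpow (INR N) z))%C.
Proof.
  unfold gauss_prod. generalize (poch z (S N)); intro p. to_C.
  assert (A1 := Rcpow_neq_0 (INR N) z). assert (A2 := RtoC_neq_0 _ (INR_fact_neq_0 N)).
  field. split; assumption.
Qed.

Lemma gauss_prod_S N z : (1 <= N)%nat ->
  gauss_prod (S N) z = (gauss_prod N z * gauss_ratio N z)%C.
Proof.
  intro H. assert (HN : 0 < INR N) by (apply INR_pos; lia).
  assert (HS : 0 < INR (S N)) by (apply INR_pos; lia).
  unfold gauss_prod, gauss_ratio.
  replace (Rcpow (INR N) z) with (Rcpow (INR N / INR (S N)) z * Rcpow (INR (S N)) z)%C
    by (rewrite <- Rcpow_mult by (try apply Rdiv_lt_0_compat; lra); f_equal; field; lra).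
  rewrite poch_S, fact_simpl, mult_INR, RtoC_mult, RtoC_inv by lra.
  assert (A1 := Rcpow_neq_0 (INR N / INR (S N)) z).
  assert (A2 := Rcpow_neq_0 (INR (S N)) z).
  assert (A3 := RtoC_neq_0 _ (INR_fact_neq_0 N)).
  assert (A4 := RtoC_neq_0 _ (Rgt_not_eq _ _ HS)).
  to_C. field. repeat split; assumption.
Qed.

Lemma gauss_ratio_sub_1_eq N z :
  let q := / INR (S N) in let w := (z * ln (INR N / INR (S N)))%C in
  (gauss_ratio N z - 1 =
   z * (ln (INR N / INR (S N)) + q)%R + z * q * w + (1 + z * q) * (Cexp w - 1 - w))%C.
Proof. intros q w. unfold gauss_ratio, Rcpow, q, w. rewrite RtoC_plus. to_C. ring. Qed.

Lemma gauss_ratio_K_arith n m : 1 <= n -> 0 <= m ->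
  m * (/ n - / (n + 1)) + m * / (n + 1) * (m * / n) + (1 + m) * (4 * (m ^ 2 * / n ^ 2)) <=
  (m + m ^ 2 + 8 * (1 + m) * m ^ 2) / (n * (n + 1)).
Proof.
  intros Hn Hm.
  replace (/ n - / (n + 1)) with (/ (n * (n + 1))) by (field; lra).
  replace (m * / (n + 1) * (m * / n)) with (m ^ 2 * / (n * (n + 1))) by (field; lra).
  assert (Q : / n ^ 2 <= 2 * / (n * (n + 1))).
  { replace (2 * / (n * (n + 1))) with (/ (n * (n + 1) / 2)) by (field; lra).
    apply Rinv_le_contravar; nra. }
  assert (P : 0 < / (n * (n + 1))) by (apply Rinv_0_lt_compat; nra).
  assert (0 <= (1 + m) * (4 * m ^ 2)) by nra.
  replace ((1 + m) * (4 * (m ^ 2 * / n ^ 2))) with ((1 + m) * (4 * m ^ 2) * / n ^ 2) by ring.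
  unfold Rdiv. generalize (Rmult_le_compat_l _ _ _ H Q). nra.
Qed.

(* The three terms of [gauss_ratio_sub_1_eq] are bounded separately, using
   [- 1 / N <= t <= - 1 / (N + 1)] for [t = ln (N / (N + 1))]. *)
Lemma gauss_ratio_sub_1_le N z : (1 <= N)%nat -> 2 * Cmod z <= INR N ->
  Cmod (gauss_ratio N z - 1) <= gauss_ratio_K z / (INR N * INR (S N)).
Proof.
  intros H1 H2. rewrite gauss_ratio_sub_1_eq, S_INR.
  set (n := INR N) in *. assert (Hn : 1 <= n) by (apply (le_INR 1); lia).
  set (m := Cmod z) in *. assert (Hm : 0 <= m) by apply Cmod_ge_0.
  assert (Ht := ln_div_S_bounds n Hn).
  set (q := / (n + 1)) in *. set (t := ln (n / (n + 1))) in *. set (w := (z * t)%C).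
  assert (Hq : 0 < q <= 1) by (unfold q; split;
    [apply Rinv_0_lt_compat; lra|rewrite <- Rinv_1; apply Rinv_le_contravar; lra]).
  assert (Hinvn : 0 < / n) by (apply Rinv_0_lt_compat; lra).
  assert (Hw : Cmod w <= m * / n) by
    (unfold w; rewrite Cmod_mult, Cmod_R; apply Rmult_le_compat_l; [|apply Rabs_le]; lra).
  assert (Mn : m * / n <= / 2) by
    (apply (Rmult_le_reg_r n); [lra|]; rewrite Rmult_assoc, Rinv_l by lra; lra).
  assert (C1 : Cmod (z * (t + q)%R) <= m * (/ n - q)).
  { rewrite Cmod_mult, Cmod_R. apply Rmult_le_compat_l; [exact Hm|]. apply Rabs_le; lra. }
  assert (C2 : Cmod (z * q * w) <= m * q * (m * / n)).
  { rewrite !Cmod_mult, Cmod_R, (Rabs_right q) by lra.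
    apply Rmult_le_compat_l; [apply Rmult_le_pos; lra|exact Hw]. }
  assert (C3 : Cmod ((1 + z * q) * (Cexp w - 1 - w)) <= (1 + m) * (4 * (m ^ 2 * / n ^ 2))).
  { rewrite Cmod_mult. apply Rmult_le_compat; try apply Cmod_ge_0.
    - eapply Rle_trans; [apply Cmod_triangle|].
      rewrite Cmod_1, Cmod_mult, Cmod_R, (Rabs_right q) by lra. fold m. nra.
    - eapply Rle_trans; [apply Cexp_sub_1_sub_le; lra|].
      replace (m ^ 2 * / n ^ 2) with ((m * / n) ^ 2) by (field; lra).
      generalize (Cmod_ge_0 w); nra. }
  eapply Rle_trans; [apply Cmod_triangle|].
  eapply Rle_trans; [apply Rplus_le_compat;
    [eapply Rle_trans; [apply Cmod_triangle|]; apply Rplus_le_compat; [exact C1|exact C2]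
    |exact C3]|].
  apply gauss_ratio_K_arith; assumption.
Qed.

Lemma gauss_ratio_K_ge0 z : 0 <= gauss_ratio_K z.
Proof. unfold gauss_ratio_K. generalize (Cmod_ge_0 z); intro; nra. Qed.

Lemma gauss_prod_ratio_near_one z : exists N0, (1 <= N0)%nat /\
  gauss_ratio_K z / INR N0 < 1 /\
  forall N, (N0 <= N)%nat -> Cmod (gauss_prod (S N) z - gauss_prod N z) <=
    Cmod (gauss_prod N z) * (gauss_ratio_K z / (INR N * INR (S N))).
Proof.
  destruct (INR_unbounded (2 * Cmod z + 2 * gauss_ratio_K z + 1)) as [N0 HN0].
  assert (KK := gauss_ratio_K_ge0 z). assert (CC := Cmod_ge_0 z).
  assert (H1 : (1 <= N0)%nat) by (destruct N0; [simpl in HN0; lra|lia]).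
  exists N0; split; [exact H1|split].
  - apply (Rmult_lt_reg_r (INR N0)); [apply INR_pos, H1|].
    unfold Rdiv. rewrite Rmult_assoc, Rinv_l by (apply not_0_INR; lia). lra.
  - intros N HN. rewrite gauss_prod_S by lia.
    replace (gauss_prod N z * gauss_ratio N z - gauss_prod N z)%C
      with (gauss_prod N z * (gauss_ratio N z - 1))%C by ring.
    rewrite Cmod_mult. apply Rmult_le_compat_l; [apply Cmod_ge_0|].
    apply gauss_ratio_sub_1_le; [lia|].
    apply Rle_trans with (INR N0); [lra|apply le_INR, HN].
Qed.

Lemma gauss_prod_cv z : Ccv (fun n => gauss_prod (S n) z) (rGamma z).
Proof.
  destruct (gauss_prod_ratio_near_one z) as [N0 [H1 [_ Hstep]]].
  destruct (ratio_near_one_cv _ _ _ H1 (gauss_ratio_K_ge0 z) Hstep) as [L HL].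
  apply Ccv_incr_1 in HL.
  rewrite rGamma_gauss_prod, (Clim_eq _ L HL). exact HL.
Qed.

Lemma gauss_prod_bounded z : exists N0 M, forall N, (N0 <= N)%nat -> Cmod (gauss_prod N z) <= M.
Proof.
  destruct (gauss_prod_ratio_near_one z) as [N0 [H1 [_ Hstep]]].
  exists N0, (Cmod (gauss_prod N0 z) * exp (gauss_ratio_K z / INR N0)).
  exact (ratio_near_one_le _ _ _ H1 (gauss_ratio_K_ge0 z) Hstep).
Qed.

Lemma gauss_prod_bounded_below z : not_nonpos_int z ->
  exists N0 m, 0 < m /\ forall N, (N0 <= N)%nat -> m <= Cmod (gauss_prod N z).
Proof.
  intro Hz. destruct (gauss_prod_ratio_near_one z) as [N0 [H1 [HK Hstep]]].
  exists N0, (Cmod (gauss_prod N0 z) * (1 - gauss_ratio_K z / INR N0)). split.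
  - apply Rmult_lt_0_compat; [apply Cmod_gt_0, gauss_prod_neq_0, Hz|lra].
  - exact (ratio_near_one_ge _ _ _ H1 (gauss_ratio_K_ge0 z) Hstep).
Qed.

Lemma rGamma_neq_0 (z : C) : not_nonpos_int z -> (rGamma z : C) <> 0.
Proof.
  intro Hz. destruct (gauss_prod_bounded_below z Hz) as [N0 [m [Hm HB]]].
  apply Cmod_gt_0, Rlt_le_trans with m; [exact Hm|].
  apply (Cmod_lim_ge _ _ _ N0 (gauss_prod_cv z)). intros n Hn. apply HB. lia.
Qed.

Lemma rGamma_S (z : C) : rGamma z = (z * rGamma (z + 1))%C.
Proof.
  assert (E : forall n, (z * gauss_prod (S n) (z + 1))%C =
            (gauss_prod (S n) z * (1 + (z + 1) * (/ INR (S n))%R))%C).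
  { intro n. unfold gauss_prod. set (N := S n).
    assert (HN : 0 < INR N) by (apply INR_pos; unfold N; lia).
    rewrite Rcpow_plus, Rcpow_1, RtoC_inv by lra.
    assert (P := poch_add_1 z (S N)).
    assert (A1 := Rcpow_neq_0 (INR N) z). assert (A2 := RtoC_neq_0 _ (INR_fact_neq_0 N)).
    assert (A3 := RtoC_neq_0 (INR N) ltac:(lra)).
    transitivity (z * poch (z + 1) (S N) /
                  (INR (fact N) * (Rcpow (INR N) z * INR N)))%C;
      [unfold Complex.Cdiv; to_C; ring|].
    rewrite P, S_INR, RtoC_plus.
    revert A1. generalize (poch z (S N)) (Rcpow (INR N) z). intros p r A1. to_C.
    field. repeat split; assumption. }
  apply (Ccv_unique (fun n => z * gauss_prod (S n) (z + 1))%C).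
  - apply (Ccv_ext _ _ _ (fun n => eq_sym (E n))).
    replace (rGamma z) with (rGamma z * (1 + (z + 1) * (0 : R)))%C by (to_C; ring).
    apply Ccv_mult; [apply gauss_prod_cv|].
    apply Ccv_plus; [apply Ccv_const|]. apply Ccv_mult; [apply Ccv_const|].
    apply Ccv_RtoC, (is_lim_seq_ext (fun n => / INR (n + 1)));
      [intro; rewrite Nat.add_1_r; reflexivity|apply is_lim_seq_inv_INR].
  - apply Ccv_mult; [apply Ccv_const|apply gauss_prod_cv].
Qed.

(** * Gauss's summation theorem *)

Definition F21_term (a b c : C) (m : nat) : C :=
  (poch a m * poch b m / (INR (fact m) * poch c m))%C.

Definition F21 (a b c : C) : C := Clim (Csum (F21_term a b c)).

Lemma F21_term_0 (a b c : C) : F21_term a b c 0 = 1.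
Proof. unfold F21_term. simpl. to_C. apply injective_projections; simpl; field. Qed.

Lemma F21_term_gauss_prod (a b c : C) N : not_nonpos_int c -> (1 <= N)%nat ->
  F21_term a b c (S N) =
  (gauss_prod N a * gauss_prod N b / gauss_prod N c *
   (Rcpow (INR N) a * Rcpow (INR N) b / Rcpow (INR N) c) / INR (S N))%C.
Proof.
  intros Hc HN. unfold F21_term. rewrite !poch_gauss_prod, fact_simpl, mult_INR, RtoC_mult.
  assert (A1 := Rcpow_neq_0 (INR N) c). assert (A2 := RtoC_neq_0 _ (INR_fact_neq_0 N)).
  assert (A3 := RtoC_neq_0 (INR (S N)) ltac:(apply not_0_INR; lia)).
  assert (A4 := gauss_prod_neq_0 N c Hc).
  to_C. field. repeat split; assumption.
Qed.

Lemma Cmod_F21_term_S (a b c : C) N : not_nonpos_int c -> (1 <= N)%nat ->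
  Cmod (F21_term a b c (S N)) =
  Cmod (gauss_prod N a) * Cmod (gauss_prod N b) / Cmod (gauss_prod N c) *
  (exp (- fst (c - (a + b))%C * ln (INR N)) / INR (S N)).
Proof.
  intros Hc HN. rewrite F21_term_gauss_prod by assumption.
  assert (HNp : 0 < INR (S N)) by (apply INR_pos; lia).
  assert (Gc := gauss_prod_neq_0 N c Hc). assert (Rc := Rcpow_neq_0 (INR N) c).
  rewrite Cmod_div by (apply RtoC_neq_0; lra).
  rewrite Cmod_mult, !Cmod_div by assumption.
  rewrite !Cmod_mult, !Cmod_Rcpow, Cmod_R, Rabs_right by lra.
  replace (exp (- fst (c - (a + b))%C * ln (INR N)))
    with (exp (fst a * ln (INR N)) * exp (fst b * ln (INR N)) / exp (fst c * ln (INR N)))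
    by (unfold Rdiv; rewrite <- exp_plus, <- exp_Ropp, <- exp_plus; f_equal; simpl; ring).
  unfold Rdiv; ring.
Qed.

Lemma F21_term_le (a b c : C) : not_nonpos_int c ->
  exists N0 C0, (1 <= N0)%nat /\ 0 <= C0 /\ forall N, (N0 <= N)%nat ->
    Cmod (F21_term a b c (S N)) <= C0 * (exp (- fst (c - (a + b))%C * ln (INR N)) / INR (S N)).
Proof.
  intro Hc.
  destruct (gauss_prod_bounded a) as [Na [Ma UBa]].
  destruct (gauss_prod_bounded b) as [Nb [Mb UBb]].
  destruct (gauss_prod_bounded_below c Hc) as [Nc [mc [Hmc LBc]]].
  assert (HMa := Rmax_l 0 Ma). assert (HMb := Rmax_l 0 Mb).
  exists (S (Nat.max Na (Nat.max Nb Nc))), (Rmax 0 Ma * Rmax 0 Mb / mc).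
  split; [lia|split].
  { unfold Rdiv. apply Rmult_le_pos; [apply Rmult_le_pos; assumption|].
    left; apply Rinv_0_lt_compat, Hmc. }
  intros N HN. rewrite Cmod_F21_term_S by (auto; lia).
  apply Rmult_le_compat_r.
  { unfold Rdiv. apply Rmult_le_pos; [left; apply exp_pos|].
    left; apply Rinv_0_lt_compat, INR_pos; lia. }
  unfold Rdiv. apply Rmult_le_compat.
  - apply Rmult_le_pos; apply Cmod_ge_0.
  - left; apply Rinv_0_lt_compat, Cmod_gt_0, gauss_prod_neq_0, Hc.
  - apply Rmult_le_compat; try apply Cmod_ge_0;
      eapply Rle_trans; [apply UBa; lia|apply Rmax_r|apply UBb; lia|apply Rmax_r].
  - apply Rinv_le_contravar; [exact Hmc|apply LBc; lia].
Qed.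

Section ConvergentF21.

Variables (a b c : C).
Hypotheses (Hc : not_nonpos_int c) (Hd : 0 < fst (c - (a + b))%C).

Lemma ex_series_Cmod_F21_term : ex_series (fun m => Cmod (F21_term a b c m)).
Proof.
  destruct (F21_term_le a b c Hc) as [N0 [C0 [H1 [HC0 HB]]]].
  apply (ex_series_incr_n _ (S (S N0))).
  apply (ex_series_Rabs_le _ (fun n => C0 *
    (exp (- fst (c - (a + b))%C * ln (INR (S (n + N0)))) / INR (S (n + N0))))).
  - intro n. rewrite Rabs_right by (apply Rle_ge, Cmod_ge_0).
    replace (S (S N0) + n)%nat with (S (S (n + N0))) by lia.
    eapply Rle_trans; [apply HB; lia|]. apply Rmult_le_compat_l; [exact HC0|].
    unfold Rdiv. apply Rmult_le_compat_l; [left; apply exp_pos|].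
    apply Rinv_le_contravar; [apply INR_pos; lia|apply le_INR; lia].
  - apply ex_series_Rscal, ex_series_exp_neg_ln_div; assumption.
Qed.

Lemma F21_cv : Cseries_cv (F21_term a b c) (F21 a b c).
Proof.
  destruct (Cseries_ex _ ex_series_Cmod_F21_term) as [l Hl].
  unfold F21. rewrite (Clim_eq _ l Hl). exact Hl.
Qed.

Lemma F21_sub_1_cv : Cseries_cv (fun m => F21_term a b c (S m)) (F21 a b c - 1)%C.
Proof.
  assert (A := ex_series_Cmod_F21_term).
  apply (ex_series_incr_1 (fun m => Cmod (F21_term a b c m))) in A.
  destruct (Cseries_ex _ A) as [l Hl].
  rewrite <- (Ccv_unique _ _ _ (Cseries_incr_1 _ _ Hl) F21_cv), F21_term_0.
  replace (1 + l - 1)%C with l by (to_C; ring). exact Hl.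
Qed.

Lemma INR_mul_F21_term_cv_0 : Ccv (fun N => INR N * F21_term a b c N)%C (0 : C).
Proof.
  destruct (F21_term_le a b c Hc) as [N0 [C0 [H1 [HC0 HB]]]].
  apply (Ccv_incr_n _ (S N0)).
  apply (Ccv_of_Cmod_le _ _ (fun n => C0 * exp (- fst (c - (a + b))%C * ln (INR (n + N0))))).
  - intro n. replace (INR (n + S N0) * F21_term a b c (n + S N0) - 0)%C
      with (INR (n + S N0) * F21_term a b c (n + S N0))%C by ring.
    rewrite Cmod_mult, Cmod_R.
    replace (n + S N0)%nat with (S (n + N0)) by lia.
    assert (HS : 0 < INR (S (n + N0))) by (apply INR_pos; lia).
    rewrite Rabs_right by lra.
    eapply Rle_trans; [apply Rmult_le_compat_l; [lra|apply HB; lia]|].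
    right. field. lra.
  - replace 0 with (C0 * 0) by ring. apply is_lim_seq_mult'; [apply is_lim_seq_const|].
    apply (is_lim_seq_incr_n (fun n => exp (- fst (c - (a + b))%C * ln (INR n))) N0).
    apply is_lim_seq_exp_neg_ln, Hd.
Qed.

End ConvergentF21.

Lemma F21_term_contiguous (a b c : C) m : not_nonpos_int c ->
  (c * (c - (a + b)) * F21_term a b c m - (c - a) * (c - b) * F21_term a b (c + 1) m =
   c * INR m * F21_term a b c m - c * INR (S m) * F21_term a b c (S m))%C.
Proof.
  intro Hc. unfold F21_term. rewrite !poch_S, fact_simpl, mult_INR, RtoC_mult.
  assert (C0 := not_nonpos_int_neq_0 c Hc).
  replace (poch (c + 1)%C m : C) with (poch c m * (c + INR m) / c)%C
    by (rewrite <- poch_add_1; to_C; field; exact C0).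
  rewrite S_INR, RtoC_plus.
  assert (A1 := poch_neq_0 c m Hc). assert (A2 := not_nonpos_int_add_INR_neq_0 c m Hc).
  assert (A3 := RtoC_neq_0 _ (INR_fact_neq_0 m)).
  assert (A4 : (INR m + 1 : C) <> 0)
    by (rewrite <- RtoC_plus; apply RtoC_neq_0; generalize (pos_INR m); lra).
  revert A1 A2. generalize (poch a m) (poch b m) (poch c m). intros pa pb pc A1 A2. to_C.
  field. repeat split; assumption.
Qed.

(* By [F21_term_contiguous] the partial sums of [c (c - a - b) F(c) - (c - a) (c - b) F(c + 1)]
   telescope to [- c (M + 1) F21_term a b c (M + 1)], which tends to 0. *)
Lemma F21_contiguous (a b c : C) : not_nonpos_int c -> 0 < fst (c - (a + b))%C ->
  (c * (c - (a + b)) * F21 a b c = (c - a) * (c - b) * F21 a b (c + 1))%C.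
Proof.
  intros Hc Hd.
  set (k1 := (c * (c - (a + b)))%C). set (k2 := ((c - a) * (c - b))%C).
  set (D := fun m => (k1 * F21_term a b c m + - k2 * F21_term a b (c + 1) m)%C).
  assert (S1 : Cseries_cv D (k1 * F21 a b c + - k2 * F21 a b (c + 1))%C).
  { apply Cseries_plus; apply Cseries_scal, F21_cv; try assumption.
    - apply not_nonpos_int_add_1, Hc.
    - simpl; simpl in Hd; lra. }
  assert (S2 : Cseries_cv D (0 : C)).
  { assert (P : forall M, (Csum D M : C) = (- c * (INR (S M) * F21_term a b c (S M)))%C).
    { assert (Dm : forall m, D m = (c * INR m * F21_term a b c m
                                  - c * INR (S m) * F21_term a b c (S m))%C).
      { intro m. rewrite <- F21_term_contiguous by exact Hc. unfold D, k1, k2. ring. }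
      induction M.
      - change (Csum D 0) with (D 0%nat). rewrite Dm. simpl. to_C. ring.
      - change (Csum D (S M)) with (Csum D M + D (S M))%C. rewrite IHM, Dm. ring. }
    apply (Ccv_ext _ _ _ (fun M => eq_sym (P M))).
    replace (0 : C) with (- c * 0)%C by ring.
    apply Ccv_mult; [apply Ccv_const|].
    apply (Ccv_incr_1 (fun N => INR N * F21_term a b c N)%C), INR_mul_F21_term_cv_0; assumption. }
  assert (E := Ccv_unique _ _ _ S1 S2).
  apply (f_equal (fun z => (z + k2 * F21 a b (c + 1))%C)) in E.
  fold k1 k2. rewrite <- (Cplus_0_l (k2 * F21 a b (c + 1))), <- E. ring.
Qed.

Lemma F21_contiguous_iter (a b c : C) n : not_nonpos_int c -> 0 < fst (c - (a + b))%C ->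
  (F21 a b c * poch c n * poch (c - (a + b)) n =
   poch (c - a) n * poch (c - b) n * F21 a b (c + INR n))%C.
Proof.
  intros Hc Hd. induction n.
  - replace (c + INR 0)%C with c by (simpl; to_C; ring). simpl. to_C. ring.
  - assert (K := F21_contiguous a b (c + INR n) (not_nonpos_int_add_INR c n Hc)
                   ltac:(simpl; simpl in Hd; generalize (pos_INR n); lra)).
    replace (c + INR (S n))%C with (c + INR n + 1)%C by (rewrite S_INR, RtoC_plus; ring).
    rewrite !poch_S.
    transitivity (F21 a b c * poch c n * poch (c - (a + b)) n *
                  ((c + INR n) * (c - (a + b) + INR n)))%C; [ring|].
    rewrite IHn.
    transitivity (poch (c - a) n * poch (c - b) n *
      ((c + INR n) * (c + INR n - (a + b)) * F21 a b (c + INR n)))%C; [ring|].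
    rewrite K. ring.
Qed.

Lemma Cmod_poch_le_add (w : C) s m : 0 <= fst w -> 0 <= s ->
  Cmod (poch w m) <= Cmod (poch (w + s)%C m).
Proof.
  intros H1 H2. induction m; [simpl; lra|].
  rewrite !poch_S, !Cmod_mult. apply Rmult_le_compat; try apply Cmod_ge_0; [exact IHm|].
  unfold Cmod. apply sqrt_le_1_alt. simpl. generalize (pos_INR m). nra.
Qed.

Lemma Cmod_F21_term_add_le (a b w : C) s m : 0 < fst w -> 0 <= s ->
  Cmod (F21_term a b (w + s) m) <= Cmod (F21_term a b w m).
Proof.
  intros H1 H2. unfold F21_term.
  assert (N1 := poch_neq_0 w m (not_nonpos_int_of_Re_pos w H1)).
  assert (N2 := poch_neq_0 (w + s)%C m (not_nonpos_int_of_Re_pos (w + s)%C ltac:(simpl; lra))).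
  assert (N3 := RtoC_neq_0 _ (INR_fact_neq_0 m)).
  rewrite !Cmod_div by (apply Cmult_neq_0; assumption). rewrite !Cmod_mult.
  apply Rmult_le_compat_l; [apply Rmult_le_pos; apply Cmod_ge_0|].
  apply Rinv_le_contravar.
  - apply Rmult_lt_0_compat; apply Cmod_gt_0; assumption.
  - apply Rmult_le_compat_l; [apply Cmod_ge_0|]. apply Cmod_poch_le_add; lra.
Qed.

Lemma Cmod_F21_term_S_le (a b c : C) m : not_nonpos_int c ->
  Cmod (F21_term a b c (S m)) <=
  Cmod a * Cmod b / Cmod c * Cmod (F21_term (a + 1) (b + 1) (c + 1) m).
Proof.
  intro Hc. assert (C0 := not_nonpos_int_neq_0 c Hc).
  assert (HS : 1 <= INR (S m)) by (apply (le_INR 1); lia).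
  assert (E : F21_term a b c (S m) =
            (a * b / c * F21_term (a + 1) (b + 1) (c + 1) m / INR (S m))%C).
  { unfold F21_term. rewrite !poch_S_l, fact_simpl, mult_INR, RtoC_mult.
    assert (A1 := poch_neq_0 _ m (not_nonpos_int_add_1 c Hc)).
    assert (A2 := RtoC_neq_0 _ (INR_fact_neq_0 m)).
    assert (A3 := RtoC_neq_0 (INR (S m)) ltac:(lra)).
    revert A1. generalize (poch (c + 1)%C m). intros p A1. to_C.
    field. repeat split; assumption. }
  rewrite E, Cmod_div by (apply RtoC_neq_0; lra).
  rewrite Cmod_mult, Cmod_div, Cmod_mult, Cmod_R, Rabs_right by (exact C0 || lra).
  set (X := Cmod (F21_term (a + 1) (b + 1) (c + 1) m)).
  assert (0 <= Cmod a * Cmod b / Cmod c * X).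
  { unfold Rdiv. repeat apply Rmult_le_pos; try apply Cmod_ge_0.
    left; apply Rinv_0_lt_compat, Cmod_gt_0, C0. }
  unfold Rdiv. rewrite <- (Rmult_1_r (Cmod a * Cmod b * / Cmod c * X)) at 2.
  apply Rmult_le_compat_l; [exact H|]. rewrite <- Rinv_1. apply Rinv_le_contravar; lra.
Qed.

Lemma Series_nonneg (g : nat -> R) : (forall n, 0 <= g n) -> ex_series g -> 0 <= Series g.
Proof.
  intros H E. rewrite <- (Rmult_0_l (Series g)), <- Series_scal_l.
  apply Series_le; [|exact E]. intro; rewrite Rmult_0_l; split; [lra|apply H].
Qed.

Lemma is_lim_seq_div_add_INR (K x : R) : is_lim_seq (fun k => K / (x + INR k)) 0.
Proof.
  replace 0 with (K * 0) by ring. apply is_lim_seq_mult'; [apply is_lim_seq_const|].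
  replace (Finite 0) with (Rbar_inv p_infty) by reflexivity.
  apply is_lim_seq_inv; [|discriminate].
  replace p_infty with (Rbar_plus x p_infty) by reflexivity.
  apply (is_lim_seq_plus _ _ x p_infty);
    [apply is_lim_seq_const|apply is_lim_seq_INR|reflexivity].
Qed.

(* The point of the fixed [w] below [c + 1] is that the bound does not depend on [c]. *)
Lemma Cmod_F21_sub_1_le (a b c w : C) (s : R) :
  0 < fst c -> 0 < fst (c - (a + b))%C -> 0 < fst w -> 0 <= s -> (c + 1)%C = (w + s)%C ->
  ex_series (fun m => Cmod (F21_term (a + 1) (b + 1) w m)) ->
  Cmod (F21 a b c - 1) <=
  Cmod a * Cmod b * Series (fun m => Cmod (F21_term (a + 1) (b + 1) w m)) / fst c.
Proof.
  intros Hc Hd Hw Hs Ew AW.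
  assert (Cc : fst c <= Cmod c) by (generalize (Rabs_fst_le_Cmod c) (Rle_abs (fst c)); lra).
  set (K := Cmod a * Cmod b / Cmod c).
  assert (HK : 0 <= K) by (unfold K, Rdiv; apply Rmult_le_pos;
    [apply Rmult_le_pos; apply Cmod_ge_0|left; apply Rinv_0_lt_compat; lra]).
  eapply Rle_trans; [apply (Cmod_Cseries_le _ _ (fun m => K * Cmod (F21_term (a + 1) (b + 1) w m))
                      (F21_sub_1_cv a b c (not_nonpos_int_of_Re_pos c Hc) Hd))|..].
  - intro m. eapply Rle_trans; [apply Cmod_F21_term_S_le, not_nonpos_int_of_Re_pos, Hc|].
    apply Rmult_le_compat_l; [exact HK|]. rewrite Ew.
    apply Cmod_F21_term_add_le; assumption.
  - apply ex_series_Rscal, AW.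
  - rewrite Series_scal_l. unfold K, Rdiv.
    assert (HB := Series_nonneg _ (fun m => Cmod_ge_0 _) AW).
    assert (/ Cmod c <= / fst c) by (apply Rinv_le_contravar; lra).
    assert (0 <= Cmod a * Cmod b) by (apply Rmult_le_pos; apply Cmod_ge_0).
    set (B := Series _) in *.
    replace (Cmod a * Cmod b * / Cmod c * B) with (Cmod a * Cmod b * B * / Cmod c) by ring.
    apply Rmult_le_compat_l; [apply Rmult_le_pos|]; lra.
Qed.

Lemma F21_add_INR_cv_1 (a b c : C) : not_nonpos_int c -> 0 < fst (c - (a + b))%C ->
  Ccv (fun n => F21 a b (c + INR n)%C) (1 : C).
Proof.
  intros Hc Hd.
  destruct (INR_unbounded (Rmax 1 (1 - fst c))) as [n0 Hn0].
  generalize (Rmax_l 1 (1 - fst c)) (Rmax_r 1 (1 - fst c)); intros.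
  set (w := (c + INR n0 + 1)%C). assert (Hw : 0 < fst w) by (unfold w; simpl; lra).
  assert (AW : ex_series (fun m => Cmod (F21_term (a + 1) (b + 1) w m))).
  { apply ex_series_Cmod_F21_term; [apply not_nonpos_int_of_Re_pos, Hw|].
    unfold w; simpl; simpl in Hd. lra. }
  apply (Ccv_incr_n _ n0), (Ccv_of_Cmod_le _ _ (fun k =>
    Cmod a * Cmod b * Series (fun m => Cmod (F21_term (a + 1) (b + 1) w m)) /
    (fst c + INR n0 + INR k))); [|apply is_lim_seq_div_add_INR].
  intro k. replace (fst c + INR n0 + INR k) with (fst (c + INR (k + n0))%C)
    by (simpl; rewrite plus_INR; ring).
  generalize (pos_INR k) (plus_INR k n0); intros.
  apply (Cmod_F21_sub_1_le _ _ _ w (INR k)); [simpl; lra|simpl; simpl in Hd; lra|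
    exact Hw|exact (pos_INR k)| |exact AW].
  unfold w. rewrite plus_INR, RtoC_plus. ring.
Qed.

Lemma Cmult_reg_r (x y k : C) : k <> 0 -> (x * k = y * k)%C -> x = y.
Proof.
  intros Hk E. transitivity (x * k * / k)%C; [field; exact Hk|].
  rewrite E. field. exact Hk.
Qed.

Lemma F21_gauss_prod_iter (a b c : C) N : not_nonpos_int c -> 0 < fst (c - (a + b))%C ->
  (F21 a b c * gauss_prod N c * gauss_prod N (c - (a + b)) =
   gauss_prod N (c - a) * gauss_prod N (c - b) * F21 a b (c + INR (S N)))%C.
Proof.
  intros Hc Hd. assert (IT := F21_contiguous_iter a b c (S N) Hc Hd).
  rewrite !poch_gauss_prod in IT.
  set (f := (INR (fact N) : C)) in IT.
  set (p := fun z => Rcpow (INR N) z) in IT.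
  assert (RR : (p c * p (c - (a + b)) = p (c - a) * p (c - b))%C)
    by (unfold p; rewrite <- !Rcpow_plus; f_equal; ring).
  apply (Cmult_reg_r _ _ (f * f * (p (c - a) * p (c - b)))%C).
  { repeat apply Cmult_neq_0; try apply Rcpow_neq_0; apply RtoC_neq_0, INR_fact_neq_0. }
  transitivity (F21 a b c * (gauss_prod N c * (f * p c)) *
                (gauss_prod N (c - (a + b)) * (f * p (c - (a + b)))))%C;
    [rewrite <- RR; ring|].
  rewrite IT. ring.
Qed.

Theorem gauss_summation (a b c : C) : not_nonpos_int c -> 0 < fst (c - (a + b))%C ->
  (F21 a b c * rGamma c * rGamma (c - (a + b)) = rGamma (c - a) * rGamma (c - b))%C.
Proof.
  intros Hc Hd.
  apply (Ccv_unique (fun k => F21 a b c * gauss_prod (S k) c * gauss_prod (S k) (c - (a + b)))%C).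
  - apply Ccv_mult; [apply Ccv_mult; [apply Ccv_const|]|]; apply gauss_prod_cv.
  - apply (Ccv_ext (fun k => gauss_prod (S k) (c - a) * gauss_prod (S k) (c - b) *
                            F21 a b (c + INR (S (S k))))%C);
      [intro k; symmetry; apply F21_gauss_prod_iter; assumption|].
    replace (rGamma (c - a) * rGamma (c - b))%C
      with (rGamma (c - a) * rGamma (c - b) * 1)%C by (to_C; ring).
    apply Ccv_mult; [apply Ccv_mult; apply gauss_prod_cv|].
    apply (Ccv_incr_1 (fun k => F21 a b (c + INR (S k))%C)).
    apply (Ccv_incr_1 (fun k => F21 a b (c + INR k)%C)).
    apply F21_add_INR_cv_1; assumption.
Qed.

(** * The [3F2] series *)

Lemma F32_term_eq (a b c d : C) m : not_nonpos_int c -> not_nonpos_int d ->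
  F32_term a b (c + 1)%C d c m = (F21_term a b d m + / c * (INR m * F21_term a b d m))%C.
Proof.
  intros Hc Hd. unfold F32_term, F21_term. assert (C0 := not_nonpos_int_neq_0 c Hc).
  replace (poch (c + 1)%C m : C) with (poch c m * (c + INR m) / c)%C
    by (rewrite <- poch_add_1; to_C; field; exact C0).
  assert (A1 := poch_neq_0 c m Hc). assert (A2 := poch_neq_0 d m Hd).
  assert (A3 := RtoC_neq_0 _ (INR_fact_neq_0 m)).
  revert A1 A2. generalize (poch a m) (poch b m) (poch c m) (poch d m).
  intros pa pb pc pd A1 A2. to_C.
  field. repeat split; assumption.
Qed.

Lemma INR_mul_F21_term_S (a b d : C) m : not_nonpos_int d ->
  (INR (S m) * F21_term a b d (S m) = a * b / d * F21_term (a + 1) (b + 1) (d + 1) m)%C.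
Proof.
  intro Hd. unfold F21_term. rewrite !poch_S_l, fact_simpl, mult_INR, RtoC_mult.
  assert (A1 := not_nonpos_int_neq_0 d Hd).
  assert (A2 := poch_neq_0 _ m (not_nonpos_int_add_1 d Hd)).
  assert (A3 := RtoC_neq_0 _ (INR_fact_neq_0 m)).
  assert (A4 := RtoC_neq_0 (INR (S m)) ltac:(apply not_0_INR; lia)).
  revert A2. generalize (poch (d + 1)%C m). intros p A2. to_C.
  field. repeat split; assumption.
Qed.

Lemma F32_cv (a b c d : C) : not_nonpos_int c -> not_nonpos_int d ->
  0 < fst (d - (a + b) - 1)%C ->
  Cseries_cv (F32_term a b (c + 1)%C d c)
    (F21 a b d + / c * (a * b / d * F21 (a + 1) (b + 1) (d + 1)))%C.
Proof.
  intros Hc Hd He.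
  apply (Cseries_ext (fun m => F21_term a b d m + / c * (INR m * F21_term a b d m))%C);
    [intro m; symmetry; apply F32_term_eq; assumption|].
  apply Cseries_plus; [apply F21_cv; [exact Hd|simpl in *; lra]|].
  apply Cseries_scal.
  replace (a * b / d * F21 (a + 1) (b + 1) (d + 1))%C
    with (INR 0 * F21_term a b d 0 + a * b / d * F21 (a + 1) (b + 1) (d + 1))%C
    by (simpl; to_C; ring).
  apply Cseries_incr_1.
  apply (Cseries_ext (fun m => a * b / d * F21_term (a + 1) (b + 1) (d + 1) m)%C);
    [intro m; symmetry; apply INR_mul_F21_term_S, Hd|].
  apply Cseries_scal, F21_cv; [apply not_nonpos_int_add_1, Hd|simpl in *; lra].
Qed.

Lemma F32_value_eq (a b c d : C) : not_nonpos_int c -> not_nonpos_int d ->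
  0 < fst (d - (a + b) - 1)%C ->
  (F21 a b d + / c * (a * b / d * F21 (a + 1) (b + 1) (d + 1)))%C =
  ((c * (d - (a + b) - 1) + a * b) * Gamma d * Gamma (d - (a + b) - 1) *
   rGamma (d - b) * rGamma (d - a) / c)%C.
Proof.
  intros Hc Hd He. set (e := (d - (a + b) - 1)%C) in *.
  assert (Hd' : 0 < fst (d - (a + b))%C) by (unfold e in He; simpl in *; lra).
  assert (G1 := gauss_summation a b d Hd Hd').
  assert (G2 := gauss_summation (a + 1) (b + 1) (d + 1) (not_nonpos_int_add_1 d Hd)
                  ltac:(unfold e in He; simpl in *; lra)).
  replace (d + 1 - (a + 1 + (b + 1)))%C with e in G2 by (unfold e; ring).
  replace (d + 1 - (a + 1))%C with (d - a)%C in G2 by ring.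
  replace (d + 1 - (b + 1))%C with (d - b)%C in G2 by ring.
  assert (Rd := rGamma_S d). assert (Rde := rGamma_S e).
  replace (e + 1)%C with (d - (a + b))%C in Rde by (unfold e; ring).
  assert (Hr1 := rGamma_neq_0 (d + 1)%C (not_nonpos_int_add_1 d Hd)).
  assert (Hr0 := rGamma_neq_0 (d - (a + b))%C (not_nonpos_int_of_Re_pos _ Hd')).
  assert (C0 := not_nonpos_int_neq_0 c Hc). assert (D0 := not_nonpos_int_neq_0 d Hd).
  assert (E0 := not_nonpos_int_neq_0 e (not_nonpos_int_of_Re_pos e He)).
  unfold Gamma. to_C. rewrite Rd in G1 |- *. rewrite Rde in G2 |- *.
  revert G1 G2 Hr1 Hr0.
  generalize (rGamma (d + 1)%C) (rGamma (d - (a + b))%C) (rGamma (d - a)%C)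
    (rGamma (d - b)%C) (F21 a b d) (F21 (a + 1) (b + 1) (d + 1)).
  intros r1 r0 ra rb F F' G1 G2 Hr1 Hr0. to_C.
  assert (EF : F = (ra * rb / (d * r1 * r0))%C).
  { rewrite <- G1. field. repeat split; assumption. }
  assert (EF' : F' = (ra * rb / (r1 * (e * r0)))%C).
  { rewrite <- G2. field. repeat split; assumption. }
  rewrite EF, EF'. field. repeat split; assumption.
Qed.

Theorem mainTheorem14 (k : nat) (a b c : Cplx)
  (hc : not_nonpos_int c)
  (hb1 : not_nonpos_int (Cadd (Csub (Cadd (RtoC 1) (Cmul (RtoC 2) c)) b) (RtoC (INR k))))
  (hre : 0 < Re (Cadd (Csub (Csub (Cmul (RtoC 2) c) a) (Cmul (RtoC 2) b)) (RtoC (INR k)))) :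
  let two_c := Cmul (RtoC 2) c in
  let K := RtoC (INR k) in
  Cseries_cv
    (F32_term a b (Cadd c (RtoC 1))
              (Cadd (Csub (Cadd (RtoC 1) two_c) b) K) c)
    (Cdiv
      (Cmul (Cmul (Cmul (Cmul
         (Cadd (Cmul (Csub a two_c) (Csub b c)) (Cmul K c))
         (Gamma (Cadd (Cadd (Csub two_c b) K) (RtoC 1))))
         (Gamma (Cadd (Csub (Csub two_c a) (Cmul (RtoC 2) b)) K)))
         (rGamma (Cadd (Cadd (Csub two_c (Cmul (RtoC 2) b)) K) (RtoC 1))))
         (rGamma (Cadd (Csub (Csub two_c a) b) (Cadd K (RtoC 1)))))
      c).
Proof.
  intros two_c K.
  set (d := Cadd (Csub (Cadd (RtoC 1) two_c) b) K).
  assert (He : 0 < fst (d - (a + b) - 1)%C).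
  { unfold d, two_c, K. unfold Re in hre. simpl in *. lra. }
  assert (S := F32_cv a b c d hc hb1 He).
  rewrite F32_value_eq in S by assumption.
  assert (E1 : Cadd (Cadd (Csub two_c b) K) (RtoC 1) = d) by (unfold d; to_C; ring).
  assert (E2 : Cadd (Csub (Csub two_c a) (Cmul (RtoC 2) b)) K = (d - (a + b) - 1)%C)
    by (unfold d; to_C; ring).
  assert (E3 : Cadd (Cadd (Csub two_c (Cmul (RtoC 2) b)) K) (RtoC 1) = (d - b)%C)
    by (unfold d; to_C; ring).
  assert (E4 : Cadd (Csub (Csub two_c a) b) (Cadd K (RtoC 1)) = (d - a)%C)
    by (unfold d; to_C; ring).
  assert (E5 : Cadd (Cmul (Csub a two_c) (Csub b c)) (Cmul K c) =
               (c * (d - (a + b) - 1) + a * b)%C) by (unfold d, two_c; to_C; ring).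
  rewrite E1, E2, E3, E4, E5. exact S.
Qed.
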